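(* Let $\mathscr M$ be a module over $\mathbb Z[\mathbb L]_{\mathrm{loc}}=\mathbb Z[\mathbb L,\mathbb L^{-1},(1-\mathbb L^n)^{-1},n\ge1]$ and let $\mathbf T$, $\mathbf U$ be disjoint tuples of variables. Then $$\mathscr M[[\mathbf T]]_{\mathrm{int}}[[\mathbf U]]_{\mathrm{int}}\subset\mathscr M[[\mathbf T,\mathbf U]]_{\mathrm{int}}\subset\mathscr M[[\mathbf T]]_{\mathrm{int}}[[\mathbf U]],$$ where $\mathscr M[[\mathbf T]]_{\mathrm{int}}[[\mathbf U]]$ is the set of formal power series in $\mathbf U$ with coefficients in $\mathscr M[[\mathbf T]]_{\mathrm{int}}$, and $\mathscr M[[\mathbf T]]_{\mathrm{int}}[[\mathbf U]]_{\mathrm{int}}$ is the set of integrable series in $\mathbf U$ over the module $\mathscr M[[\mathbf T]]_{\mathrm{int}}$.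
   Context: For a module $\mathscr M$ over $\mathbb Z[\mathbb L,\mathbb L^{-1}]$ and variables $\mathbf T=(T_1,\dots,T_r)$, $\mathscr M[[\mathbf T]]_{\mathrm{int}}=\mathscr M[\mathbf T][(1-\mathbb L^m\mathbf T^{\mathbf n})^{-1}]_{m\in\mathbb Z_{<0},\,\mathbf n\in\mathbb N^r\setminus\{0\}}$, regarded as a submodule of $\mathscr M[[\mathbf T]]$ via geometric series expansion. *)

From HB Require Import structures.
From mathcomp Require Import all_boot all_order all_algebra fraction.
From mathcomp Require Import boolp.
From mathcomp Require Import ring.
Set Implicit Arguments. Unset Strict Implicit. Unset Printing Implicit Defensive.
Import Order.TTheory GRing.Theory Num.Theory.
Local Open Scope ring_scope.

(* The ring Z[L]_loc = Z[L, L^-1, (1 - L^n)^-1 (n >= 1)], realised    *)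
(* concretely as a subring of the fraction field Q(L) of Z[L]          *)
(* (L transcendental, i.e. L = 'X in {poly int}).                      *)
Notation QL := {fraction {poly int}}.
Notation "x %:F" := (@FracField.tofrac _ x) : ring_scope.

Definition locden (a : nat) (s : seq nat) : {poly int} :=
  'X^a * \prod_(n <- s) (1 - 'X^(n.+1)).

Definition locP (x : QL) : Prop :=
  exists (p : {poly int}) (a : nat) (s : seq nat), x = p%:F / (locden a s)%:F.

Definition locZL : {pred QL} := fun x => `[< locP x >].

Lemma locden_neq0 a s : locden a s != 0.
Proof.
rewrite /locden mulf_eq0 negb_or; apply/andP; split.
  by rewrite expf_eq0 polyX_eq0 andbF.
rewrite prodf_seq_neq0; apply/allP => n _ /=.
apply/eqP => /(congr1 (fun p : {poly int} => p`_0)).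
by rewrite coefB coef1 coefXn /= subr0 coef0.
Qed.

Lemma locdenF_neq0 a s : (locden a s)%:F != 0 :> QL.
Proof. by rewrite tofrac_eq0 locden_neq0. Qed.

Lemma locden_cat a b s t : locden (a + b) (s ++ t) = locden a s * locden b t.
Proof.
rewrite /locden exprD big_cat /=.
by rewrite -!mulrA; congr (_ * _); rewrite mulrCA.
Qed.

Lemma frac_sub_aux (F : fieldType) (p q A B : F) : A != 0 -> B != 0 ->
  p / A - q / B = (p * B - q * A) / (A * B).
Proof. by move=> hA hB; field; rewrite hA hB. Qed.

Lemma frac_mul_aux (F : fieldType) (p q A B : F) : A != 0 -> B != 0 ->
  p / A * (q / B) = (p * q) / (A * B).
Proof. by move=> hA hB; field; rewrite hA hB. Qed.

Lemma locZL_subring_closed : subring_closed locZL.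
Proof.
split.
- apply/asboolP; exists 1, 0%N, [::].
  by rewrite /locden big_nil expr0 mulr1 divr1.
- move=> x y /asboolP [p [a [s ->]]] /asboolP [q [b [t ->]]].
  apply/asboolP; exists (p * locden b t - q * locden a s), (a + b)%N, (s ++ t).
  have ha := locdenF_neq0 a s; have hb := locdenF_neq0 b t.
  apply: (etrans (frac_sub_aux _ _ ha hb)).
  rewrite locden_cat !rmorphB !rmorphM; reflexivity.
- move=> x y /asboolP [p [a [s ->]]] /asboolP [q [b [t ->]]].
  apply/asboolP; exists (p * q), (a + b)%N, (s ++ t).
  have ha := locdenF_neq0 a s; have hb := locdenF_neq0 b t.
  apply: (etrans (frac_mul_aux _ _ ha hb)).
  rewrite locden_cat !rmorphM; reflexivity.
Qed.

HB.instance Definition _ :=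
  GRing.isSubringClosed.Build QL locZL locZL_subring_closed.

Record ZLloc := MkZLloc { ZLloc_val : QL; _ : ZLloc_val \in locZL }.

HB.instance Definition _ := [isSub for ZLloc_val].
HB.instance Definition _ := [Choice of ZLloc by <:].
HB.instance Definition _ := [SubChoice_isSubComNzRing of ZLloc by <:].

Lemma Lpow_in (m : int) : (('X : {poly int})%:F ^ m : QL) \in locZL.
Proof.
apply/asboolP; case: m => k.
- exists 'X^k, 0%N, [::].
  by rewrite /locden big_nil expr0 mulr1 divr1 rmorphXn.
- exists 1, k.+1, [::].
  by rewrite /locden big_nil mulr1 rmorph1 mul1r NegzE -exprnN rmorphXn.
Qed.

Definition Lpow (m : int) : ZLloc := MkZLloc (Lpow_in m).

(* Formal power series in r variables T = (T_1,...,T_r) with          *)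
(* coefficients in a Z[L]_loc-module M: functions N^r -> M.            *)
Definition expo (r : nat) := {ffun 'I_r -> nat}.
Definition expo0 (r : nat) : expo r := [ffun=> 0%N].
Definition expo_le (r : nat) (n a : expo r) : bool := [forall i, n i <= a i]%N.
Definition expo_sub (r : nat) (a n : expo r) : expo r := [ffun i => a i - n i]%N.
(* exponent of T^a U^b in the variables (T, U) *)
Definition expo_cat (r s : nat) (a : expo r) (b : expo s) : expo (r + s) :=
  [ffun i => match split i with inl j => a j | inr k => b k end].

(* A factor (1 - L^m T^n) is encoded by the pair (m, n). *)
Definition valid_factor (r : nat) (f : int * expo r) : bool :=
  (f.1 < 0) && (f.2 != expo0 r).

(* carry an extra index x : X on which the operation acts pointwise; this  *)
(* is used for series whose coefficients are themselves series (x is then  *)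
(* the exponent of the inner variables), ordinary series use X = unit.    *)
Definition mul_factor (M : lmodType ZLloc) (r : nat) (X : Type)
    (f : int * expo r) (F : expo r -> X -> M) : expo r -> X -> M :=
  fun a x => F a x - (if expo_le f.2 a then Lpow f.1 *: F (expo_sub a f.2) x else 0).

Definition mul_factors (M : lmodType ZLloc) (r : nat) (X : Type)
    (fs : seq (int * expo r)) (F : expo r -> X -> M) : expo r -> X -> M :=
  foldr (@mul_factor M r X) F fs.

Definition finsupp (M : lmodType ZLloc) (r : nat) (X : Type)
    (P : expo r -> X -> M) : Prop :=
  exists S : seq (expo r), forall a, a \notin S -> forall x, P a x = 0.

(* F lies in (coefficient module)[T][(1 - L^m T^n)^-1]_{m<0, n<>0}:       *)
(* some finite product Q of factors (1 - L^m T^n), m < 0, n <> 0, makes  *)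
(* Q * F a polynomial, i.e. F = P / Q expanded as a power series.        *)
Definition integrable_gen (M : lmodType ZLloc) (r : nat) (X : Type)
    (F : expo r -> X -> M) : Prop :=
  exists fs : seq (int * expo r),
    all (@valid_factor r) fs /\ finsupp (mul_factors fs F).

Definition integrable (M : lmodType ZLloc) (r : nat) (F : expo r -> M) : Prop :=
  integrable_gen (fun a (_ : unit) => F a).

(* G in M[[T]]_int[[U]]_int, where G b a = coefficient of T^a U^b:        *)
(* every U-coefficient lies in M[[T]]_int, and G is integrable in U over   *)
(* the module M[[T]]_int (whose operations are coefficientwise).          *)
Definition int_int_series (M : lmodType ZLloc) (r s : nat)
    (G : expo s -> expo r -> M) : Prop :=
  (forall b, integrable (G b)) /\ integrable_gen G.

(* For the first inclusion, clear the denominators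
   in U, then clear those in T of the finitely many remaining U-coefficients with one
   common product of T-factors; all these factors are also factors in (T, U).  For the
   second, it suffices that dividing by a single factor (1 - L^m T^nT U^nU) keeps every
   U-coefficient T-integrable: for nU = 0 this is division by a T-factor, otherwise the
   U-coefficients are handled by induction on their total degree. *)

From mathcomp Require Import all_boot all_order all_algebra.
From mathcomp Require Import boolp.
Set Implicit Arguments. Unset Strict Implicit. Unset Printing Implicit Defensive.
Import Order.TTheory GRing.Theory Num.Theory.
Local Open Scope ring_scope.

Section Exponents.
Variable r : nat.
Implicit Types a n f g : expo r.

Lemma expo0_le a : expo_le (expo0 r) a.
Proof. by apply/forallP => i; rewrite ffunE. Qed.

Lemma expo_subn0 a : expo_sub a (expo0 r) = a.
Proof. by apply/ffunP => i; rewrite !ffunE subn0. Qed.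

Lemma expo_subAC a f g : expo_sub (expo_sub a f) g = expo_sub (expo_sub a g) f.
Proof. by apply/ffunP => i; rewrite !ffunE -!subnDA addnC. Qed.

Lemma expo_le_sub a f g :
  expo_le f a && expo_le g (expo_sub a f) = [forall i, f i + g i <= a i]%N.
Proof.
apply/andP/forallP => [[/forallP le_fa /forallP le_g] i|le_fg].
  by have := le_g i; rewrite ffunE leq_subRL ?le_fa.
split; apply/forallP => i; have := le_fg i; rewrite ?ffunE.
  exact/leq_trans/leq_addr.
by move=> le_i; rewrite leq_subRL //; apply: leq_trans le_i; apply: leq_addr.
Qed.

Lemma expo_le_subC a f g :
  expo_le f a && expo_le g (expo_sub a f) = expo_le g a && expo_le f (expo_sub a g).
Proof. by rewrite !expo_le_sub; apply: eq_forallb => i; rewrite addnC. Qed.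

Definition expo_add a n : expo r := [ffun i => a i + n i]%N.

Lemma expo_subK a n : expo_le n a -> expo_add (expo_sub a n) n = a.
Proof. by move/forallP=> le_na; apply/ffunP => i; rewrite !ffunE subnK. Qed.

Definition expo_size a := (\sum_i a i)%N.

Lemma expo_size_sub_lt n a :
  expo_le n a -> n != expo0 r -> (expo_size (expo_sub a n) < expo_size a)%N.
Proof.
move=> /forallP le_na n_neq0.
have -> : expo_size a = (expo_size (expo_sub a n) + expo_size n)%N.
  by rewrite /expo_size -big_split; apply: eq_bigr => i _; rewrite ffunE /= subnK.
rewrite -{1}(addn0 (expo_size _)) ltn_add2l lt0n sum_nat_eq0; apply: contra n_neq0 => /forallP n0.
by apply/eqP/ffunP => i; rewrite ffunE; apply/eqP/n0.
Qed.

End Exponents.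

Section Concatenation.
Variables r s : nat.

Lemma expo_catEl (a : expo r) (b : expo s) j : expo_cat a b (lshift s j) = a j.
Proof. by rewrite ffunE (unsplitK (inl _ j)). Qed.

Lemma expo_catEr (a : expo r) (b : expo s) k : expo_cat a b (rshift r k) = b k.
Proof. by rewrite ffunE (unsplitK (inr _ k)). Qed.

Lemma expo_le_cat (a a' : expo r) (b b' : expo s) :
  expo_le (expo_cat a b) (expo_cat a' b') = expo_le a a' && expo_le b b'.
Proof.
apply/forallP/andP => [le_cat|[/forallP le_a /forallP le_b] i].
  split; apply/forallP => j.
    by have := le_cat (lshift s j); rewrite !expo_catEl.
  by have := le_cat (rshift r j); rewrite !expo_catEr.
by rewrite !ffunE; case: split.
Qed.

Lemma expo_sub_cat (a a' : expo r) (b b' : expo s) :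
  expo_sub (expo_cat a b) (expo_cat a' b') = expo_cat (expo_sub a a') (expo_sub b b').
Proof. by apply/ffunP => i; rewrite !ffunE; case: split => j; rewrite ffunE. Qed.

Lemma expo_cat0 : expo_cat (expo0 r) (expo0 s) = expo0 (r + s).
Proof. by apply/ffunP => i; rewrite !ffunE; case: split => j; rewrite ffunE. Qed.

Lemma expo_cat_eq0 (a : expo r) (b : expo s) :
  (expo_cat a b == expo0 (r + s)) = (a == expo0 r) && (b == expo0 s).
Proof.
apply/eqP/andP => [cat0|[/eqP-> /eqP->]]; last exact: expo_cat0.
split; apply/eqP/ffunP => j; rewrite ffunE.
  by rewrite -(expo_catEl a b) cat0 ffunE.
by rewrite -(expo_catEr a b) cat0 ffunE.
Qed.

Definition expo_lpart (c : expo (r + s)) : expo r := [ffun j => c (lshift s j)].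
Definition expo_rpart (c : expo (r + s)) : expo s := [ffun k => c (rshift r k)].

Lemma expo_cat_parts c : expo_cat (expo_lpart c) (expo_rpart c) = c.
Proof. by apply/ffunP => i; rewrite ffunE; case: split_ordP => j ->; rewrite ffunE. Qed.

Lemma expo_lpart_cat (a : expo r) (b : expo s) : expo_lpart (expo_cat a b) = a.
Proof. by apply/ffunP => j; rewrite ffunE expo_catEl. Qed.

End Concatenation.

Lemma Lpow0 : Lpow 0 = 1.
Proof. exact/val_inj/expr0z. Qed.

Section Factors.
Variables (M : lmodType ZLloc) (r : nat) (X : Type).
Implicit Types (f g : int * expo r) (fs gs : seq (int * expo r)).
Implicit Types (F G H : expo r -> X -> M) (S : seq (expo r)).

Lemma mul_factorC f g H :
  mul_factor f (mul_factor g H) = mul_factor g (mul_factor f H).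
Proof.
apply/funext=> a; apply/funext=> x; rewrite /mul_factor.
have le_fg := expo_le_subC a f.2 g.2; have sub_fg := expo_subAC a f.2 g.2.
case le_fa: (expo_le f.2 a); case le_ga: (expo_le g.2 a); rewrite le_fa le_ga /= in le_fg.
- rewrite -le_fg sub_fg; case: (expo_le g.2 (expo_sub a f.2)); last first.
    by rewrite !subr0 addrAC.
  rewrite !scalerBr !scalerA mulrC !opprB !addrA.
  by rewrite !(addrAC _ (_ *: _ (expo_sub (expo_sub a g.2) f.2) x)) (addrAC (H a x)).
- by rewrite le_fg !subr0.
- by rewrite -le_fg !subr0.
- by [].
Qed.

Lemma mul_factors_cat fs gs H :
  mul_factors (fs ++ gs) H = mul_factors fs (mul_factors gs H).
Proof. by rewrite /mul_factors foldr_cat. Qed.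

Lemma mul_factors_factorC fs f H :
  mul_factors fs (mul_factor f H) = mul_factor f (mul_factors fs H).
Proof. by elim: fs => //= g fs ->; rewrite mul_factorC. Qed.

Lemma mul_factorsC fs gs H :
  mul_factors fs (mul_factors gs H) = mul_factors gs (mul_factors fs H).
Proof. by elim: gs => //= g gs <-; rewrite mul_factors_factorC. Qed.

Lemma mul_factorsD fs F G :
  mul_factors fs (fun a x => F a x + G a x) =
  fun a x => mul_factors fs F a x + mul_factors fs G a x.
Proof.
elim: fs => //= f fs ->; apply/funext=> a; apply/funext=> x; rewrite /mul_factor.
by case: ifP => _; rewrite ?subr0 // scalerDr opprD addrACA.
Qed.

Lemma mul_factorsZ fs c F :
  mul_factors fs (fun a x => c *: F a x) = fun a x => c *: mul_factors fs F a x.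
Proof.
elim: fs => //= f fs ->; apply/funext=> a; apply/funext=> x; rewrite /mul_factor.
by case: ifP => _; rewrite ?subr0 // scalerBr !scalerA mulrC.
Qed.

Lemma mul_factors0 fs : mul_factors fs (fun (_ : expo r) (_ : X) => 0 : M) = fun _ _ => 0.
Proof.
elim: fs => //= f fs ->; apply/funext=> a; apply/funext=> x; rewrite /mul_factor.
by case: ifP => _; rewrite ?scaler0 subrr.
Qed.

Definition supported_in F S := forall a, a \notin S -> forall x, F a x = 0.

Definition factor_support f S := S ++ map (fun a => expo_add a f.2) S.
Definition factors_support fs S := foldr factor_support S fs.

Lemma supported_in_mul_factor f F S :
  supported_in F S -> supported_in (mul_factor f F) (factor_support f S).
Proof.
move=> FS a; rewrite mem_cat negb_or => /andP[aS a_shift] x; rewrite /mul_factor FS //.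
case: ifP => le_fa; rewrite ?subrr // FS ?scaler0 ?subrr //.
by apply: contra a_shift => aS'; apply/mapP; exists (expo_sub a f.2); rewrite ?expo_subK.
Qed.

Lemma supported_in_mul_factors fs F S :
  supported_in F S -> supported_in (mul_factors fs F) (factors_support fs S).
Proof. by move=> FS; elim: fs => //= f fs; apply: supported_in_mul_factor. Qed.

Lemma eq_integrable_gen F G :
  (forall a x, F a x = G a x) -> integrable_gen F -> integrable_gen G.
Proof. by move=> FG; have -> : F = G by apply/funext=> a; apply/funext=> x. Qed.

Lemma integrable_gen_supported F S : supported_in F S -> integrable_gen F.
Proof. by exists [::]; split => //; exists S. Qed.

Lemma integrable_genD F G :
  integrable_gen F -> integrable_gen G -> integrable_gen (fun a x => F a x + G a x).
Proof.
move=> [fs [fs_valid [S FS]]] [gs [gs_valid [T GT]]]; exists (fs ++ gs); split.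
  by rewrite all_cat fs_valid gs_valid.
rewrite mul_factors_cat !mul_factorsD mul_factorsC.
exists (factors_support gs S ++ factors_support fs T) => a.
rewrite mem_cat negb_or => /andP[aS aT] x.
by rewrite (supported_in_mul_factors FS aS) (supported_in_mul_factors GT aT) addr0.
Qed.

Lemma integrable_genZ c F : integrable_gen F -> integrable_gen (fun a x => c *: F a x).
Proof.
move=> [fs [fs_valid [S FS]]]; exists fs; split => //; rewrite mul_factorsZ.
by exists S => a aS x; rewrite FS ?scaler0.
Qed.

Lemma integrable_genB F G :
  integrable_gen F -> integrable_gen G -> integrable_gen (fun a x => F a x - G a x).
Proof.
move=> intF intG; apply: eq_integrable_gen (integrable_genD intF (integrable_genZ (-1) intG)).
by move=> a x; rewrite scaleN1r.
Qed.

Lemma integrable_gen_mul_factor f F : integrable_gen F -> integrable_gen (mul_factor f F).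
Proof.
move=> [fs [fs_valid [S FS]]]; exists fs; split => //; rewrite mul_factors_factorC.
by exists (factor_support f S); apply: supported_in_mul_factor.
Qed.

(* T^n F = F - (1 - L^0 T^n) F *)
Lemma integrable_gen_shift n F :
  integrable_gen F ->
  integrable_gen (fun a x => if expo_le n a then F (expo_sub a n) x else 0).
Proof.
move=> intF; apply: eq_integrable_gen
  (integrable_genB intF (integrable_gen_mul_factor (0%R, n) intF)) => a x.
by rewrite /mul_factor /= Lpow0 scale1r; case: ifP; rewrite ?subr0 ?subrr // opprB addrC subrK.
Qed.

Lemma integrable_gen_common (I : eqType) (G : I -> expo r -> X -> M) (bs : seq I) :
  (forall b, b \in bs -> integrable_gen (G b)) ->
  exists fs, all (@valid_factor r) fs /\
    exists S, forall b, b \in bs -> supported_in (mul_factors fs (G b)) S.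
Proof.
elim: bs => [|b bs IH] intG; first by exists [::]; split => //; exists [::].
have [fs [fs_valid [S FS]]] := IH (fun b' b'bs => intG b' (mem_behead (s := b :: bs) b'bs)).
have [gs [gs_valid [T GT]]] := intG b (mem_head b bs).
exists (gs ++ fs); split; first by rewrite all_cat gs_valid fs_valid.
exists (factors_support fs T ++ factors_support gs S) => b'.
rewrite in_cons mul_factors_cat => /orP[/eqP-> | b'bs] a;
  rewrite mem_cat negb_or => /andP[aT aS] x.
  by rewrite mul_factorsC (supported_in_mul_factors GT aT).
exact: (supported_in_mul_factors (FS b' b'bs) aS).
Qed.

End Factors.

Section Splitting.
Variables (M : lmodType ZLloc) (r s : nat).

Lemma mul_factor_cat (X : Type) m (nT : expo r) (nU : expo s)
    (H : expo (r + s) -> X -> M) a b x :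
  mul_factor (m, expo_cat nT nU) H (expo_cat a b) x =
  H (expo_cat a b) x - (if expo_le nT a && expo_le nU b
    then Lpow m *: H (expo_cat (expo_sub a nT) (expo_sub b nU)) x else 0).
Proof. by rewrite /mul_factor /= expo_le_cat expo_sub_cat. Qed.

Definition factor_liftl (t : int * expo r) : int * expo (r + s) :=
  (t.1, expo_cat t.2 (expo0 s)).
Definition factor_liftr (u : int * expo s) : int * expo (r + s) :=
  (u.1, expo_cat (expo0 r) u.2).

Lemma valid_factor_liftl t : valid_factor (factor_liftl t) = valid_factor t.
Proof. by rewrite /valid_factor /= expo_cat_eq0 eqxx andbT. Qed.

Lemma valid_factor_liftr u : valid_factor (factor_liftr u) = valid_factor u.
Proof. by rewrite /valid_factor /= expo_cat_eq0 eqxx. Qed.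

Lemma mul_factors_liftl (X : Type) ts (H : expo (r + s) -> X -> M) a b x :
  mul_factors (map factor_liftl ts) H (expo_cat a b) x =
  mul_factors ts (fun a' x' => H (expo_cat a' b) x') a x.
Proof.
elim: ts a => //= t ts IH a.
by rewrite mul_factor_cat expo0_le andbT expo_subn0 /mul_factor !IH.
Qed.

Lemma mul_factors_liftr (X : Type) us (H : expo (r + s) -> X -> M) a b x :
  mul_factors (map factor_liftr us) H (expo_cat a b) x =
  mul_factors us (fun b' a' => H (expo_cat a' b') x) b a.
Proof.
elim: us b => //= u us IH b.
by rewrite mul_factor_cat expo0_le expo_subn0 /mul_factor !IH.
Qed.

Lemma integrable_mul_factors_coef us (G : expo s -> expo r -> M) :
  (forall b, integrable (G b)) -> forall b, integrable (mul_factors us G b).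
Proof.
move=> intG; elim: us => //= u us IH b; rewrite /mul_factor; case: (expo_le u.2 b).
  exact: integrable_genB (IH b) (integrable_genZ _ (IH _)).
by apply: eq_integrable_gen (IH b) => a x; rewrite subr0.
Qed.

Lemma integrable_of_int_int_series (F : expo (r + s) -> M) :
  int_int_series (fun b a => F (expo_cat a b)) -> integrable F.
Proof.
move=> [intG [us [us_valid [S GS]]]].
set P := mul_factors us (fun b a => F (expo_cat a b)).
have [ts [ts_valid [L PL]]] := integrable_gen_common (G := fun b a (_ : unit) => P b a)
  (bs := S) (fun b _ => integrable_mul_factors_coef us intG b).
exists (map factor_liftl ts ++ map factor_liftr us); split.
  by rewrite all_cat !all_map (eq_all valid_factor_liftl) (eq_all valid_factor_liftr) ts_valid.
exists [seq expo_cat a b | a <- L, b <- S] => c; rewrite -(expo_cat_parts c).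
set a := expo_lpart c; set b := expo_rpart c => abLS x.
rewrite mul_factors_cat mul_factors_liftl.
have -> : (fun a' (x' : unit) =>
    mul_factors (map factor_liftr us) (fun c _ => F c) (expo_cat a' b) x') =
    fun a' _ => P b a'.
  by apply/funext => a'; apply/funext => x'; rewrite mul_factors_liftr.
have [bS|bNS] := boolP (b \in S).
  by rewrite (PL b bS) //; apply: contra abLS => aL; apply: allpairs_f.
have -> : (fun a' (_ : unit) => P b a') = fun _ _ => 0.
  by apply/funext => a'; apply/funext => x'; apply: GS.
by rewrite mul_factors0.
Qed.

Definition coefs_integrable (H : expo (r + s) -> unit -> M) :=
  forall b, integrable (fun a => H (expo_cat a b) tt).

Lemma coefs_integrable_supported H L : supported_in H L -> coefs_integrable H.
Proof.
move=> HL b; apply: (@integrable_gen_supported _ _ _ _ (map (@expo_lpart r s) L)) => a aL [].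
by apply: HL; apply: contra aL => abL; apply/mapP; exists (expo_cat a b); rewrite ?expo_lpart_cat.
Qed.

Lemma coefs_integrable_mul_factorl m nT H : m < 0 -> nT != expo0 r ->
  coefs_integrable (mul_factor (m, expo_cat nT (expo0 s)) H) -> coefs_integrable H.
Proof.
move=> m_lt0 nT_neq0 intfH b; have [gs [gs_valid gsH]] := intfH b.
exists (gs ++ [:: (m, nT)]); split.
  by rewrite all_cat gs_valid /= /valid_factor /= m_lt0 nT_neq0.
rewrite mul_factors_cat /=.
suff <- : (fun a (_ : unit) => mul_factor (m, expo_cat nT (expo0 s)) H (expo_cat a b) tt) =
    mul_factor (m, nT) (fun a (_ : unit) => H (expo_cat a b) tt) by [].
by apply/funext => a; apply/funext => -[]; rewrite mul_factor_cat expo0_le andbT expo_subn0.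
Qed.

(* H = (1 - L^m T^nT U^nU) H + L^m T^nT U^nU H, and for nU <> 0 the last term only
   involves U-coefficients of smaller total degree. *)
Lemma coefs_integrable_mul_factorr m nT nU H : nU != expo0 s ->
  coefs_integrable (mul_factor (m, expo_cat nT nU) H) -> coefs_integrable H.
Proof.
move=> nU_neq0 intfH.
suff coef_lt k b : (expo_size b < k)%N -> integrable (fun a => H (expo_cat a b) tt).
  by move=> b; apply: (coef_lt (expo_size b).+1).
elim: k b => // k IH b b_lt.
apply: (@eq_integrable_gen _ _ _ (fun a x => mul_factor (m, expo_cat nT nU) H (expo_cat a b) tt +
    (if expo_le nU b then Lpow m *:
       (if expo_le nT a then H (expo_cat (expo_sub a nT) (expo_sub b nU)) tt else 0)
     else 0))).
  move=> a []; rewrite mul_factor_cat.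
  by case: (expo_le nU b); case: (expo_le nT a); rewrite /= ?scaler0 ?subr0 ?addr0 // subrK.
apply: integrable_genD; first exact: intfH.
case le_nUb: (expo_le nU b); last exact: (@integrable_gen_supported _ _ _ _ [::]).
apply/integrable_genZ.
apply: (@integrable_gen_shift _ _ _ nT (fun a _ => H (expo_cat a (expo_sub b nU)) tt)).
by apply: IH; apply: leq_trans (expo_size_sub_lt le_nUb nU_neq0) _; rewrite -ltnS.
Qed.

Lemma coefs_integrable_mul_factor f H : valid_factor f ->
  coefs_integrable (mul_factor f H) -> coefs_integrable H.
Proof.
case: f => m n /andP[/= m_lt0 n_neq0]; rewrite -(expo_cat_parts n) in n_neq0 *.
have [nU0|] := eqVneq (expo_rpart n) (expo0 s); last exact: coefs_integrable_mul_factorr.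
rewrite nU0 expo_cat_eq0 eqxx andbT in n_neq0 *.
exact: coefs_integrable_mul_factorl.
Qed.

Lemma coefs_integrable_mul_factors fs H : all (@valid_factor (r + s)) fs ->
  coefs_integrable (mul_factors fs H) -> coefs_integrable H.
Proof.
elim: fs => //= f fs IH /andP[f_valid fs_valid] intfsH.
exact/IH/(coefs_integrable_mul_factor f_valid).
Qed.

Lemma integrable_coef (F : expo (r + s) -> M) :
  integrable F -> forall b : expo s, integrable (fun a : expo r => F (expo_cat a b)).
Proof.
move=> [fs [fs_valid [L FL]]].
exact: coefs_integrable_mul_factors fs_valid (coefs_integrable_supported FL).
Qed.

End Splitting.

Theorem lemma5p2 (M : lmodType ZLloc) (r s : nat) (F : expo (r + s) -> M) :
  (int_int_series (fun b a => F (expo_cat a b)) -> integrable F) /\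
  (integrable F -> forall b : expo s, integrable (fun a : expo r => F (expo_cat a b))).
Proof. by split; [apply: integrable_of_int_int_series | apply: integrable_coef]. Qed.
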